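(* Let $\rho=\sum_j p_j|e_j\rangle\langle e_j|$ be a full-rank density matrix on $\mathbb{C}^D$ (all $p_j>0$, orthonormal eigenvectors $|e_j\rangle$) with Hermitian derivatives $\rho_1=\partial_1\rho$, $\rho_2=\partial_2\rho$. Let $u\in[0,1]$, $\mathbf z\in\mathbb R^6$, $\mathbf b=(0,1,0,0,0,1)^\top$, $A=\tfrac12(z_1\rho+z_2\rho_1+z_3\rho_2-iz_4\rho-iz_5\rho_1-iz_6\rho_2)$, and $$\mathsf L(Y,u,\mathbf z)=-\mathbf b^\top\mathbf z+u\,\mathrm{Tr}[Y\rho Y^\dagger]+(1-u)\,\mathrm{Tr}[Y^\dagger\rho Y]+\mathrm{Tr}[AY]+\mathrm{Tr}[A^\dagger Y^\dagger]$$ for complex $D\times D$ matrices $Y$. Then the $Y$ minimising $\mathsf L(\cdot,u,\mathbf z)$ is $$Y=-\sum_{j,k}(u\,p_k+(1-u)\,p_j)^{-1}\langle e_j|A^\dagger|e_k\rangle\,|e_j\rangle\langle e_k|.$$ *)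

(* Complex numbers: an arbitrary numeric closed field C
   (e.g. complex R for R : realType, or algC); conjugation is z^*. *)
From HB Require Import structures.
From mathcomp Require Import all_boot all_order all_algebra.
Set Implicit Arguments. Unset Strict Implicit. Unset Printing Implicit Defensive.
Import Order.TTheory GRing.Theory Num.Theory.
Local Open Scope ring_scope.

Section Defs.
Variables (C : numClosedFieldType) (D : nat).

Definition adjmx (m n : nat) (A : 'M[C]_(m, n)) : 'M[C]_(n, m) :=
  (map_mx (fun x => x^*) A)^T.

Definition is_hermitian (A : 'M[C]_D) : Prop := adjmx A = A.

Definition ketbra (x y : 'cV[C]_D) : 'M[C]_D := x *m adjmx y.

Definition braket (x : 'cV[C]_D) (M : 'M[C]_D) (y : 'cV[C]_D) : C :=
  (adjmx x *m M *m y) 0 0.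

Definition orthonormal (e : 'I_D -> 'cV[C]_D) : Prop :=
  forall j k, (adjmx (e j) *m e k) 0 0 = (j == k)%:R.

Definition full_rank_density (rho : 'M[C]_D) (p : 'I_D -> C)
  (e : 'I_D -> 'cV[C]_D) : Prop :=
  [/\ forall j, 0 < p j, \sum_j p j = 1, orthonormal e &
      rho = \sum_j p j *: ketbra (e j) (e j)].

(* A = 1/2 (z1 rho + z2 rho1 + z3 rho2 - i z4 rho - i z5 rho1 - i z6 rho2),
   z indexed 0..5 *)
Definition Amat (rho rho1 rho2 : 'M[C]_D) (z : 'I_6 -> C) : 'M[C]_D :=
  2^-1 *: (z 0 *: rho + z 1 *: rho1 + z 2 *: rho2
           - 'i * z 3 *: rho - 'i * z 4 *: rho1 - 'i * z 5 *: rho2).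

Definition bvec : 'I_6 -> C := fun i => if (i == 1 :> nat) || (i == 5 :> nat) then 1 else 0.

Definition Lfun (rho rho1 rho2 : 'M[C]_D) (Y : 'M[C]_D) (u : C) (z : 'I_6 -> C) : C :=
  let A := Amat rho rho1 rho2 z in
  - (\sum_i bvec i * z i)
  + u * \tr (Y *m rho *m adjmx Y) + (1 - u) * \tr (adjmx Y *m rho *m Y)
  + \tr (A *m Y) + \tr (adjmx A *m adjmx Y).

Definition Ystar (rho rho1 rho2 : 'M[C]_D) (p : 'I_D -> C)
  (e : 'I_D -> 'cV[C]_D) (u : C) (z : 'I_6 -> C) : 'M[C]_D :=
  - \sum_j \sum_k ((u * p k + (1 - u) * p j)^-1
        * braket (e j) (adjmx (Amat rho rho1 rho2 z)) (e k))
        *: ketbra (e j) (e k).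

End Defs.

From Pilot Require Import Defs.
From HB Require Import structures.
From mathcomp Require Import all_boot all_order all_algebra.
From mathcomp Require Import ring.
Import Order.TTheory GRing.Theory Num.Theory.
Local Open Scope ring_scope.
Set Implicit Arguments. Unset Strict Implicit.

(** The Lagrangian is a Hermitian quadratic function of [Y].  Writing
    [G(Y) = u Y rho + (1 - u) rho Y + A^dagger] for its gradient, one has
    [L (Y + H) = L Y + q H + Tr (H G(Y)^dagger) + Tr (H^dagger G(Y))] with
    [q H = u Tr (H rho H^dagger) + (1 - u) Tr (H^dagger rho H)], and [q] is
    positive definite because [rho] is.  In the eigenbasis of [rho] the
    equation [G(Y) = 0] is a diagonal Sylvester equation, whose unique
    solution is the claimed minimiser. *)

Section Adjoint.
Variable C : numClosedFieldType.

Lemma adjmx0 m n : adjmx (0 : 'M[C]_(m, n)) = 0.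
Proof. by apply/matrixP=> i j; rewrite !mxE conjC0. Qed.

Lemma adjmxD m n (A B : 'M[C]_(m, n)) : adjmx (A + B) = adjmx A + adjmx B.
Proof. by apply/matrixP=> i j; rewrite !mxE rmorphD. Qed.

Lemma adjmxZ m n (a : C) (A : 'M[C]_(m, n)) : adjmx (a *: A) = a^* *: adjmx A.
Proof. by apply/matrixP=> i j; rewrite !mxE rmorphM. Qed.

Lemma adjmxM m n k (A : 'M[C]_(m, n)) (B : 'M[C]_(n, k)) :
  adjmx (A *m B) = adjmx B *m adjmx A.
Proof. by rewrite /adjmx map_mxM trmx_mul. Qed.

Lemma adjmxK m n (A : 'M[C]_(m, n)) : adjmx (adjmx A) = A.
Proof. by apply/matrixP=> i j; rewrite !mxE conjCK. Qed.

Lemma adjmx_sum m n (I : finType) (F : I -> 'M[C]_(m, n)) :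
  adjmx (\sum_i F i) = \sum_i adjmx (F i).
Proof. exact: (big_morph _ (@adjmxD m n) (@adjmx0 m n)). Qed.

Lemma adjmx_eq0 m n (A : 'M[C]_(m, n)) : (adjmx A == 0) = (A == 0).
Proof.
apply/eqP/eqP => [A0 | ->]; last exact: adjmx0.
by rewrite -[A]adjmxK A0 adjmx0.
Qed.

End Adjoint.

Section SquaredNorm.
Variables (C : numClosedFieldType) (n : nat).

Definition sqnorm (x : 'cV[C]_n) : C := (adjmx x *m x) 0 0.

Lemma sqnormE (x : 'cV[C]_n) : sqnorm x = \sum_i `|x i 0| ^+ 2.
Proof.
by rewrite /sqnorm mxE; apply: eq_bigr => i _; rewrite !mxE mulrC -normCK.
Qed.

Lemma sqnorm_ge0 (x : 'cV[C]_n) : 0 <= sqnorm x.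
Proof. by rewrite sqnormE; apply: sumr_ge0 => i _; rewrite exprn_ge0. Qed.

Lemma sqnorm_eq0 (x : 'cV[C]_n) : (sqnorm x == 0) = (x == 0).
Proof.
rewrite sqnormE; apply/eqP/eqP => [x0 | ->]; last first.
  by rewrite big1 // => i _; rewrite mxE normr0 expr0n.
have xi0 i : `|x i 0| ^+ 2 = 0.
  by apply: (psumr_eq0P _ x0) => // k _; rewrite exprn_ge0.
apply/matrixP=> i j; rewrite (ord1 j) mxE.
by apply/eqP; rewrite -normr_eq0 -sqrf_eq0 xi0.
Qed.

End SquaredNorm.

Section OrthonormalBasis.
Variables (C : numClosedFieldType) (D : nat) (e : 'I_D -> 'cV[C]_D).
Hypothesis e_on : Defs.orthonormal e.

Lemma adjmx_mul_orthonormal j k : adjmx (e j) *m e k = (j == k)%:R%:M.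
Proof. by rewrite [LHS]mx11_scalar e_on. Qed.

Lemma sum_ketbra_id : \sum_j ketbra (e j) (e j) = 1%:M.
Proof.
pose U : 'M[C]_D := \matrix_(i, j) e j i 0.
have UtU : adjmx U *m U = 1%:M.
  apply/matrixP=> j k; rewrite !mxE -e_on !mxE.
  by apply: eq_bigr => i _; rewrite !mxE.
apply/matrixP=> a b; rewrite -(mulmx1C UtU) summxE !mxE.
by apply: eq_bigr => j _; rewrite !mxE big_ord1 !mxE.
Qed.

Lemma ketbraM (x y : 'cV[C]_D) j k :
  ketbra x (e j) *m ketbra (e k) y = (j == k)%:R *: ketbra x y.
Proof.
rewrite /ketbra mulmxA -(mulmxA x) adjmx_mul_orthonormal.
by rewrite mul_mx_scalar scalemxAl.
Qed.

Lemma ketbra_expansion (B : 'M[C]_D) :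
  B = \sum_j \sum_k braket (e j) B (e k) *: ketbra (e j) (e k).
Proof.
rewrite -[LHS]mul1mx -[LHS]mulmx1 -sum_ketbra_id !mulmx_suml.
apply: eq_bigr => j _; rewrite mulmx_sumr; apply: eq_bigr => k _.
by rewrite /ketbra /braket scalemxAl -mul_mx_scalar -mx11_scalar !mulmxA.
Qed.

Lemma mx_eq0_on_basis (H : 'M[C]_D) : (forall j, H *m e j = 0) -> H = 0.
Proof.
move=> He; rewrite -[H]mulmx1 -sum_ketbra_id mulmx_sumr big1 // => j _.
by rewrite /ketbra mulmxA He mul0mx.
Qed.

End OrthonormalBasis.

Section Lagrangian.
Variables (C : numClosedFieldType) (D : nat).
Implicit Types (rho A Y H : 'M[C]_D) (u : C).

Definition Lquad rho u H : C :=
  u * \tr (H *m rho *m adjmx H) + (1 - u) * \tr (adjmx H *m rho *m H).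

Definition Lgrad rho A u Y : 'M[C]_D :=
  u *: (Y *m rho) + (1 - u) *: (rho *m Y) + adjmx A.

Lemma adjmx_Lgrad rho A u Y : is_hermitian rho -> u^* = u ->
  adjmx (Lgrad rho A u Y)
  = u *: (rho *m adjmx Y) + (1 - u) *: (adjmx Y *m rho) + A.
Proof.
rewrite /is_hermitian => rho_herm u_real.
by rewrite !adjmxD !adjmxZ !adjmxM adjmxK rho_herm rmorphB /= rmorph1 u_real.
Qed.

Lemma LfunD (rho rho1 rho2 : 'M[C]_D) u (z : 'I_6 -> C) Y H :
  is_hermitian rho -> u^* = u ->
  let G := Lgrad rho (Amat rho rho1 rho2 z) u Y in
  Lfun rho rho1 rho2 (Y + H) u z
  = Lfun rho rho1 rho2 Y u z + Lquad rho u H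
    + \tr (H *m adjmx G) + \tr (adjmx H *m G).
Proof.
move=> rho_herm u_real /=; rewrite adjmx_Lgrad // /Lfun /Lquad /Lgrad.
set A := Amat rho rho1 rho2 z; clearbody A.
rewrite adjmxD !mulmxDl !mulmxDr !mxtraceD -!scalemxAr !mxtraceZ !mulmxA.
rewrite (mxtrace_mulC (Y *m rho) (adjmx H)) (mxtrace_mulC (adjmx Y *m rho) H).
rewrite (mxtrace_mulC A H) (mxtrace_mulC (adjmx A) (adjmx H)) !mulmxA.
ring.
Qed.

Lemma Lfun_stationary (rho rho1 rho2 : 'M[C]_D) u (z : 'I_6 -> C) Y0 Y :
  is_hermitian rho -> u^* = u -> Lgrad rho (Amat rho rho1 rho2 z) u Y0 = 0 ->
  Lfun rho rho1 rho2 Y u z = Lfun rho rho1 rho2 Y0 u z + Lquad rho u (Y - Y0).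
Proof.
move=> rho_herm u_real G0; rewrite -[Y in LHS](subrKC Y0) LfunD //= G0.
by rewrite adjmx0 !mulmx0 linear0 !addr0.
Qed.

End Lagrangian.

Section SpectralDecomposition.
Variables (C : numClosedFieldType) (D : nat).
Variables (p : 'I_D -> C) (e : 'I_D -> 'cV[C]_D).
Local Notation rho := (\sum_j p j *: ketbra (e j) (e j)).

Lemma spectral_hermitian : (forall j, (p j)^* = p j) -> is_hermitian rho.
Proof.
move=> p_real; rewrite /is_hermitian adjmx_sum; apply: eq_bigr => j _.
by rewrite adjmxZ /ketbra adjmxM adjmxK p_real.
Qed.

Lemma tr_spectral_conj (H : 'M[C]_D) :
  \tr (H *m rho *m adjmx H) = \sum_j p j * sqnorm (H *m e j).
Proof.
rewrite mulmx_sumr mulmx_suml raddf_sum; apply: eq_bigr => j _ /=.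
rewrite -scalemxAr -scalemxAl mxtraceZ /ketbra /sqnorm adjmxM !mulmxA.
by rewrite -(mulmxA (H *m e j)) mxtrace_mulC trace_mx11 !mulmxA.
Qed.

Hypothesis e_on : Defs.orthonormal e.

Lemma ketbra_mul_spectral (x : 'cV[C]_D) k :
  ketbra x (e k) *m rho = p k *: ketbra x (e k).
Proof.
rewrite mulmx_sumr (bigD1 k) //= -scalemxAr ketbraM // eqxx scale1r.
rewrite big1 ?addr0 //.
by move=> j /negbTE jk; rewrite -scalemxAr ketbraM // eq_sym jk scale0r scaler0.
Qed.

Lemma spectral_mul_ketbra j (y : 'cV[C]_D) :
  rho *m ketbra (e j) y = p j *: ketbra (e j) y.
Proof.
rewrite mulmx_suml (bigD1 j) //= -scalemxAl ketbraM // eqxx scale1r.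
rewrite big1 ?addr0 //.
by move=> k /negbTE kj; rewrite -scalemxAl ketbraM // kj scale0r scaler0.
Qed.

Section Sylvester.
Variable u : C.
Hypothesis denom_neq0 : forall j k, u * p k + (1 - u) * p j != 0.

Definition sylvester_solution (B : 'M[C]_D) : 'M[C]_D :=
  \sum_j \sum_k ((u * p k + (1 - u) * p j)^-1 * braket (e j) B (e k))
    *: ketbra (e j) (e k).

Lemma sylvester_solution_spec (B : 'M[C]_D) :
  let X := sylvester_solution B in u *: (X *m rho) + (1 - u) *: (rho *m X) = B.
Proof.
rewrite /= [RHS](ketbra_expansion e_on) /sylvester_solution.
rewrite mulmx_suml mulmx_sumr !scaler_sumr -big_split; apply: eq_bigr => j _ /=.
rewrite mulmx_suml mulmx_sumr !scaler_sumr -big_split; apply: eq_bigr => k _ /=.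
rewrite -scalemxAl ketbra_mul_spectral -scalemxAr spectral_mul_ketbra.
rewrite !scalerA -scalerDl; congr (_ *: _).
by field; apply: denom_neq0.
Qed.

End Sylvester.

Hypothesis p_gt0 : forall j, 0 < p j.

Lemma tr_spectral_conj_ge0 (H : 'M[C]_D) : 0 <= \tr (H *m rho *m adjmx H).
Proof.
rewrite tr_spectral_conj; apply: sumr_ge0 => j _.
by rewrite mulr_ge0 ?sqnorm_ge0 ?ltW.
Qed.

Lemma tr_spectral_conj_eq0 (H : 'M[C]_D) :
  (\tr (H *m rho *m adjmx H) == 0) = (H == 0).
Proof.
apply/eqP/eqP => [|->]; last by rewrite !mul0mx linear0.
rewrite tr_spectral_conj => tr0; apply: (mx_eq0_on_basis e_on) => j; apply/eqP.
have term_ge0 k : true -> 0 <= p k * sqnorm (H *m e k).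
  by rewrite mulr_ge0 ?sqnorm_ge0 ?ltW.
have /eqP := psumr_eq0P term_ge0 tr0 (i := j) isT.
by rewrite mulf_eq0 gt_eqF //= sqnorm_eq0.
Qed.

Lemma tr_spectral_adj_conj_ge0 (H : 'M[C]_D) : 0 <= \tr (adjmx H *m rho *m H).
Proof. by have := tr_spectral_conj_ge0 (adjmx H); rewrite adjmxK. Qed.

Lemma tr_spectral_adj_conj_eq0 (H : 'M[C]_D) :
  (\tr (adjmx H *m rho *m H) == 0) = (H == 0).
Proof. by have := tr_spectral_conj_eq0 (adjmx H); rewrite adjmxK adjmx_eq0. Qed.

Section ConvexWeight.
Variable u : C.
Hypothesis u01 : 0 <= u <= 1.

Lemma Lquad_spectral_ge0 (H : 'M[C]_D) : 0 <= Lquad rho u H.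
Proof.
case/andP: u01 => u_ge0 u_le1.
by rewrite addr_ge0 ?mulr_ge0 ?subr_ge0
  ?tr_spectral_conj_ge0 ?tr_spectral_adj_conj_ge0.
Qed.

Lemma Lquad_spectral_eq0 (H : 'M[C]_D) : Lquad rho u H = 0 -> H = 0.
Proof.
case/andP: u01 => u_ge0 u_le1.
have [u0 | u_neq0] := eqVneq u 0.
  rewrite /Lquad u0 mul0r add0r subr0 mul1r => /eqP.
  by rewrite tr_spectral_adj_conj_eq0 => /eqP.
move=> /eqP; rewrite paddr_eq0 ?mulr_ge0 ?subr_ge0
  ?tr_spectral_conj_ge0 ?tr_spectral_adj_conj_ge0 //.
by rewrite mulf_eq0 (negbTE u_neq0) tr_spectral_conj_eq0 => /andP[/eqP].
Qed.

End ConvexWeight.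
End SpectralDecomposition.

Lemma convex_comb_gt0 (R : numDomainType) (u a b : R) :
  0 <= u <= 1 -> 0 < a -> 0 < b -> 0 < u * a + (1 - u) * b.
Proof.
case/andP=> u_ge0 u_le1 a_gt0 b_gt0.
have [->|u_neq0] := eqVneq u 0; first by rewrite mul0r add0r subr0 mul1r.
apply: ltr_wpDr; first by apply: mulr_ge0; rewrite ?subr_ge0 // ltW.
by rewrite mulr_gt0 // lt0r u_neq0.
Qed.

Lemma Ystar_stationary (C : numClosedFieldType) (D : nat)
  (rho rho1 rho2 : 'M[C]_D) (p : 'I_D -> C) (e : 'I_D -> 'cV[C]_D)
  (u : C) (z : 'I_6 -> C) :
  Defs.orthonormal e -> rho = \sum_j p j *: ketbra (e j) (e j) ->
  (forall j k, u * p k + (1 - u) * p j != 0) ->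
  Lgrad rho (Amat rho rho1 rho2 z) u (Ystar rho rho1 rho2 p e u z) = 0.
Proof.
move=> e_on rhoE denom_neq0; set B := adjmx (Amat rho rho1 rho2 z).
have -> : Ystar rho rho1 rho2 p e u z = - sylvester_solution p e u B by [].
have := sylvester_solution_spec e_on denom_neq0 B; rewrite -rhoE /= => XE.
by rewrite /Lgrad mulmxN mulNmx !scalerN -opprD XE addNr.
Qed.

Theorem lemma5 (C : numClosedFieldType) (D : nat)
  (rho rho1 rho2 : 'M[C]_D) (p : 'I_D -> C) (e : 'I_D -> 'cV[C]_D)
  (u : C) (z : 'I_6 -> C) :
  full_rank_density rho p e ->
  is_hermitian rho1 -> is_hermitian rho2 ->
  0 <= u <= 1 ->
  (forall i, z i \is Num.real) ->
  (forall Y : 'M[C]_D,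
     Lfun rho rho1 rho2 (Ystar rho rho1 rho2 p e u z) u z
       <= Lfun rho rho1 rho2 Y u z) /\
  (forall Y : 'M[C]_D,
     (forall Y' : 'M[C]_D, Lfun rho rho1 rho2 Y u z <= Lfun rho rho1 rho2 Y' u z) ->
     Y = Ystar rho rho1 rho2 p e u z).
Proof.
case=> p_gt0 _ e_on rhoE _ _ u01 _.
set Ys := Ystar rho rho1 rho2 p e u z.
have u_real : u^* = u by rewrite geC0_conj // (andP u01).1.
have rho_herm : is_hermitian rho.
  by rewrite rhoE; apply: spectral_hermitian => j; rewrite geC0_conj // ltW.
have denom_neq0 j k : u * p k + (1 - u) * p j != 0.
  by rewrite gt_eqF // convex_comb_gt0.
have Lfun_excess Y :
    Lfun rho rho1 rho2 Y u z = Lfun rho rho1 rho2 Ys u z + Lquad rho u (Y - Ys).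
  exact/Lfun_stationary/(Ystar_stationary _ _ _ e_on rhoE denom_neq0).
have Lquad_ge0 H : 0 <= Lquad rho u H by rewrite rhoE Lquad_spectral_ge0.
split=> [Y | Y Y_min]; first by rewrite (Lfun_excess Y) lerDl.
apply/eqP; rewrite -subr_eq0; apply/eqP/(Lquad_spectral_eq0 e_on p_gt0 u01).
rewrite -rhoE; apply/eqP; rewrite eq_le Lquad_ge0 andbT.
by rewrite -(lerD2l (Lfun rho rho1 rho2 Ys u z)) addr0 -Lfun_excess Y_min.
Qed.
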